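(* Let $\mathbb{V}$ be the variety in the language consisting of one binary operation symbol $*$ and two constant symbols $p$ and $0$, defined by the laws (writing $a*b*c$ for $(a*b)*c$) $$0*x = x*0 = 0,\qquad x*y*z = x*z*y,\qquad x*(y*z) = 0,\qquad x*y*y = 0.$$ Then for every integer $n \ge 0$, the free algebra in $\mathbb{V}$ on $n$ free generators has exactly $1 + (n+1)\cdot 2^{n+1}$ elements. In particular, $\mathbb{V}$ is locally finite. *)

From mathcomp Require Import all_boot.
Set Implicit Arguments. Unset Strict Implicit. Unset Printing Implicit Defensive.

Inductive term (n : nat) : Type :=
  | Var : 'I_n -> term n
  | Pc : term n
  | Zc : term n
  | Op : term n -> term n -> term n.

Arguments Pc {n}. Arguments Zc {n}.

(* The smallest congruence on term n containing every instance of the laws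
   of V:  0*x = 0, x*0 = 0, (x*y)*z = (x*z)*y, x*(y*z) = 0, (x*y)*y = 0.
   (This is the fully invariant congruence generated by the laws; by
   Birkhoff, term n / veq n is the free V-algebra on n generators.) *)
Inductive veq (n : nat) : term n -> term n -> Prop :=
  | veq_refl t : veq t t
  | veq_sym s t : veq s t -> veq t s
  | veq_trans s t u : veq s t -> veq t u -> veq s u
  | veq_op s s' t t' : veq s s' -> veq t t' -> veq (Op s t) (Op s' t')
  | veq_zl x : veq (Op Zc x) Zc
  | veq_zr x : veq (Op x Zc) Zc
  | veq_comm x y z : veq (Op (Op x y) z) (Op (Op x z) y)
  | veq_right x y z : veq (Op x (Op y z)) Zc
  | veq_sq x y : veq (Op (Op x y) y) Zc.

Definition free_algebra_card (n N : nat) : Prop :=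
  exists f : 'I_N -> term n,
    (forall i j, veq (f i) (f j) -> i = j) /\
    (forall t : term n, exists i, veq t (f i)).

From mathcomp Require Import all_boot.

Set Implicit Arguments.
Unset Strict Implicit.
Unset Printing Implicit Defensive.

(* Call the generators together with p the atoms.  The law x*(y*z) = 0 makes
   every nonzero element a left-normed product h*a_1*...*a_k of atoms; the law
   x*y*z = x*z*y lets the a_i be permuted and x*y*y = 0 kills a repeated a_i,
   so such an element is determined by its head h and the set {a_1,...,a_k}.
   These pairs (h, X), together with 0, form an algebra of V in which the
   normal forms evaluate to distinct values, so the free algebra has
   1 + (n+1) * 2^(n+1) elements. *)

Lemma free_algebra_card_model (n : nat) (T : finType)
    (ev : term n -> T) (nf : T -> term n) :
  (forall s t, veq s t -> ev s = ev t) -> cancel nf ev ->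
  (forall t, veq t (nf (ev t))) -> free_algebra_card n #|T|.
Proof.
move=> ev_veq nfK ev_nf.
exists (fun i => nf (enum_val i)); split.
  by move=> i j /ev_veq; rewrite !nfK => /enum_val_inj.
by move=> t; exists (enum_rank (ev t)); rewrite enum_rankK.
Qed.

Section RightProducts.
Variable n : nat.
Implicit Types (x y : term n) (s : seq (term n)).

Definition rmul x s : term n := foldl (@Op n) x s.

Lemma rmul_cat x s1 s2 : rmul x (s1 ++ s2) = rmul (rmul x s1) s2.
Proof. exact: foldl_cat. Qed.

Lemma rmul_veq x y s : veq x y -> veq (rmul x s) (rmul y s).
Proof. by elim: s x y => //= a s IHs x y xy; apply/IHs/veq_op/veq_refl. Qed.

Lemma Op_rmul x s a : veq (Op (rmul x s) a) (rmul (Op x a) s).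
Proof.
elim: s x => [|b s IHs] x /=; first exact: veq_refl.
exact: veq_trans (IHs _) (rmul_veq s (veq_comm x b a)).
Qed.

Lemma rmul0 s : veq (rmul Zc s) Zc.
Proof.
elim: s => [|a s IHs] /=; first exact: veq_refl.
exact: veq_trans (rmul_veq s (veq_zl a)) IHs.
Qed.

Lemma rmul_repeat x a s1 s2 : veq (rmul (Op x a) (s1 ++ a :: s2)) Zc.
Proof.
rewrite rmul_cat /=; apply: veq_trans (rmul0 s2).
apply: rmul_veq; apply: veq_trans (veq_sq (rmul x s1) a).
exact/veq_op/veq_refl/veq_sym/Op_rmul.
Qed.

Lemma rmul_perm (T : eqType) (f : T -> term n) x (r r' : seq T) :
  perm_eq r r' -> veq (rmul x (map f r)) (rmul x (map f r')).
Proof.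
elim: r x r' => [|a r IHr] x r'.
  by rewrite perm_sym => /perm_nilP ->; exact: veq_refl.
move=> rr'; have ar' : a \in r' by rewrite -(perm_mem rr') mem_head.
move: rr'; case/splitPr: ar' => r1 r2 rr'.
have rr12 : perm_eq r (r1 ++ r2).
  by rewrite -(perm_cons a) (perm_trans rr') // -cat1s perm_catCA.
apply: veq_trans (IHr _ _ rr12) _.
rewrite !map_cat !rmul_cat /=; apply/rmul_veq/veq_sym/Op_rmul.
Qed.

End RightProducts.

Section FreeModel.
Variable n : nat.

(* None stands for the constant p. *)
Local Notation atom := (option 'I_n).

Definition term_of_atom (a : atom) : term n :=
  if a is Some i then Var i else Pc.

(* Some (h, X) is h*a_1*...*a_k for any enumeration a_1, ..., a_k of X, and
   None is 0. *)
Definition model := option (atom * {set atom}).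

Definition push (a : atom) (u : model) : model :=
  if u is Some (h, X) then (if a \in X then None else Some (h, a |: X))
  else None.

Definition mulm (u v : model) : model :=
  if v is Some (a, Y) then (if Y == set0 then push a u else None) else None.

Lemma mul0m v : mulm None v = None.
Proof. by case: v => [[a Y]|] //=; case: ifP. Qed.

Lemma push_comm a b u : push a (push b u) = push b (push a u).
Proof.
case: u => [[h X]|] //=.
have [aX|aX] := boolP (a \in X); have [bX|bX] := boolP (b \in X);
  rewrite /= ?in_setU1 ?(negbTE aX) ?(negbTE bX) ?aX ?bX ?orbT ?orbF //.
by rewrite eq_sym; case: eqP => // _; rewrite setUCA.
Qed.

Lemma push_twice a u : push a (push a u) = None.
Proof. by case: u => [[h X]|] //=; case: ifP => //= _; rewrite setU11. Qed.

Lemma mulm_rcomm u v w : mulm (mulm u v) w = mulm (mulm u w) v.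
Proof.
case: v => [[a Y]|]; case: w => [[b Z]|]; rewrite /= ?mul0m ?if_same //.
case: (Y == set0); case: (Z == set0); rewrite /= ?mul0m //.
exact: push_comm.
Qed.

Lemma mulm_right u v w : mulm u (mulm v w) = None.
Proof.
case: w => [[a Y]|] //=; case: (Y == set0) => //.
case: v => [[h X]|] //=; case: (a \in X) => //=.
suff /negbTE-> : a |: X != set0 by [].
by apply/set0Pn; exists a; exact: setU11.
Qed.

Lemma mulm_sq u v : mulm (mulm u v) v = None.
Proof.
case: v => [[a Y]|] //=; case: (Y == set0); rewrite ?mul0m //=.
exact: push_twice.
Qed.

Fixpoint eval (t : term n) : model :=
  match t with
  | Var i => Some (Some i, set0)
  | Pc => Some (None, set0)
  | Zc => None
  | Op s t => mulm (eval s) (eval t)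
  end.

Lemma eval_veq s t : veq s t -> eval s = eval t.
Proof.
elim=> //= [? ? ? _ -> _ ->|? ? ? ? _ -> _ ->| | | |] //.
- by move=> x; rewrite mul0m.
- by move=> x y z; rewrite mulm_rcomm.
- by move=> x y z; rewrite mulm_right.
- by move=> x y; rewrite mulm_sq.
Qed.

Lemma eval_atom a : eval (term_of_atom a) = Some (a, set0).
Proof. by case: a. Qed.

Definition nf (u : model) : term n :=
  if u is Some (h, X) then rmul (term_of_atom h) (map term_of_atom (enum X))
  else Zc.

Lemma eval_rmul_atoms x (r : seq atom) :
  eval (rmul x (map term_of_atom r)) = foldl (fun u a => push a u) (eval x) r.
Proof. by elim: r x => //= a r IHr x; rewrite IHr /= eval_atom /= eqxx. Qed.

Lemma foldl_push h (X : {set atom}) (r : seq atom) :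
  uniq r -> all (fun a => a \notin X) r ->
  foldl (fun u a => push a u) (Some (h, X)) r = Some (h, X :|: [set a in r]).
Proof.
elim: r X => [|a r IHr] X /=.
  by move=> _ _; congr (Some (_, _)); apply/setP=> b; rewrite !inE orbF.
case/andP=> ar r_uniq /andP[aX rX]; rewrite (negbTE aX) IHr //.
  by congr (Some (_, _)); apply/setP=> b; rewrite !inE orbA (orbC (b \in X)).
apply/allP=> b br; have bX : b \notin X := allP rX b br.
rewrite in_setU1 (negbTE bX) orbF; apply/eqP=> ba.
by rewrite -ba br in ar.
Qed.

Lemma nfK : cancel nf eval.
Proof.
case=> [[h X]|] //=; rewrite eval_rmul_atoms eval_atom foldl_push ?enum_uniq //.
  by congr (Some (_, _)); apply/setP=> b; rewrite !inE mem_enum.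
by apply/allP=> b; rewrite inE.
Qed.

Lemma Op_nf u v : veq (Op (nf u) (nf v)) (nf (mulm u v)).
Proof.
case: v => [[a Y]|]; last exact: veq_zr.
case: u => [[h X]|]; last by rewrite mul0m; exact: veq_zl.
rewrite /=; have [->|/set0Pn[b bY]] := eqVneq Y set0; last first.
  have : b \in enum Y by rewrite mem_enum.
  case/splitPr=> r1 r2; rewrite map_cat rmul_cat /=.
  apply: veq_trans (veq_right _ _ (term_of_atom b)).
  exact/veq_op/veq_sym/Op_rmul/veq_refl.
rewrite enum_set0 /=; apply: veq_trans (Op_rmul _ _ _) _.
have [aX|aX] := boolP (a \in X).
  rewrite -mem_enum in aX; case/splitPr: aX => r1 r2.
  by rewrite map_cat; exact: rmul_repeat.
apply: (@rmul_perm _ _ _ _ (a :: enum X)).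
apply: uniq_perm; rewrite /= ?enum_uniq ?mem_enum ?aX //.
by move=> b; rewrite in_cons !mem_enum in_setU1.
Qed.

Lemma veq_nf_eval t : veq t (nf (eval t)).
Proof.
elim: t => [i|||s IHs t IHt] /=; rewrite ?enum_set0; try exact: veq_refl.
exact: veq_trans (veq_op IHs IHt) (Op_nf _ _).
Qed.

Lemma card_model : #|{: model}| = 1 + n.+1 * 2 ^ n.+1.
Proof.
rewrite card_option card_prod card_option card_ord -cardsT.
have -> : [set: {set atom}] = powerset [set: atom].
  by apply/setP=> X; rewrite !inE subsetT.
by rewrite card_powerset cardsT card_option card_ord.
Qed.

End FreeModel.

Theorem mainTheorem2 (n : nat) :
  free_algebra_card n (1 + n.+1 * 2 ^ n.+1).
Proof.
rewrite -(card_model n).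
exact: free_algebra_card_model (@eval_veq n) (@nfK n) (@veq_nf_eval n).
Qed.
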